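(* Let $k$ be a field, $A=kQ_A/I_A$ a monomial algebra with vertices $e_1,\dots,e_n$, and $B$ the algebra obtained by gluing the distinct non-isolated vertices $e_1,e_n$. Assume that for every loop $\alpha$ at $e_1$ or $e_n$ with $\alpha^m\in Z_A$ for some $m\ge2$, $\mathrm{char}(k)\nmid m$. Then $\psi_1$ maps $\mathrm{Ker}(\delta^1_A)$ into $\mathrm{Ker}(\delta^1_B)$, and the induced map $\mathrm{Ker}(\delta^1_A)\hookrightarrow\mathrm{Ker}(\delta^1_B)$ is an injective (restricted) Lie algebra homomorphism.
   Context: Monomial algebra: $A=kQ_A/I_A$, $Q_A$ finite quiver, $I_A$ admissible, generated by a minimal set $Z_A$ of paths of length $\ge2$; $\mathcal B_A$: paths (including trivial ones) avoiding elements of $Z_A$ as subpaths, a basis of $A$. Gluing: $B\subseteq A$ generated by $f_1=e_1+e_n$, $f_i=e_i$ ($2\le i\le n-1$) and all arrows; $B\cong kQ_B/I_B$, $Q_B$ obtained by identifying $e_1,e_n$ to $f_1$ (arrow $\alpha\mapsto\alpha^*$, path $p=a_m\cdots a_1\mapsto p^*=a_m^*\cdots a_1^*$, $e_i^*=f_i$, $e_1^*=e_n^*=f_1$), $I_B$ generated by $Z_B=\{r^*:r\in Z_A\}\cup\{b^*c^*: b,c\text{ arrows},\ t(c),s(b)\in\{e_1,e_n\},\ t(c)\ne s(b)\}$; $\mathcal B_B$ its basis paths. For path sets $X,Y$, $k(X\|Y)$ has basis the pairs $x\|y$ of parallel paths (same source and target). For monomial $\Lambda=kQ/\langle Z\rangle$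 with basis paths $\mathcal B$, $\delta^1:k(Q_1\|\mathcal B)\to k(Z\|\mathcal B)$, $a\|\gamma\mapsto\sum_{r\in Z}r\|r^{a\|\gamma}$, where $u^{a\|\gamma}$ is the sum over occurrences of $a$ in the path $u$ of the path obtained by replacing that occurrence by $\gamma$, keeping only paths in $\mathcal B$. $\mathrm{Ker}\,\delta^1$ is a Lie algebra under $[a\|\gamma,b\|\epsilon]=b\|\epsilon^{a\|\gamma}-a\|\gamma^{b\|\epsilon}$ (it corresponds to the Lie algebra of $E$-bimodule derivations of $kQ_1$ into $\Lambda$; when $\mathrm{char}(k)=p>0$ it is restricted with $p$-power map given by $p$-fold composition of derivations). $\delta^1_A,\delta^1_B$ are these for $A,B$. $\psi_1:k((Q_A)_1\|\mathcal B_A)\to k((Q_B)_1\|\mathcal B_B)$, $a\|p\mapsto a^*\|p^*$. *)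

From HB Require Import structures.
From mathcomp Require Import all_boot all_order all_algebra.
From mathcomp Require Import freeg.
Set Implicit Arguments. Unset Strict Implicit. Unset Printing Implicit Defensive.
Import GRing.Theory.
Local Open Scope ring_scope.

(* A path in a quiver with vertex type V and arrow type Ar:
   (source, target, [:: a_1; ...; a_m]) represents a_m ... a_1
   (a_1 is applied first); the trivial path e_v is (v, v, [::]). *)
Definition qpath (V Ar : finType) := (V * V * seq Ar)%type.
Definition psrc V Ar (p : qpath V Ar) : V := p.1.1.
Definition ptgt V Ar (p : qpath V Ar) : V := p.1.2.
Definition parrs V Ar (p : qpath V Ar) : seq Ar := p.2.

Section Quiver.
Context (k : fieldType) (V Ar : finType) (s t : Ar -> V).
Local Notation path := (qpath V Ar).

Definition is_path (p : path) : bool :=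
  match parrs p with
  | [::] => psrc p == ptgt p
  | a :: l => [&& s a == psrc p, t (last a l) == ptgt p
                 & path.path (fun x y => t x == s y) a l]
  end.

Definition arrowp (a : Ar) : path := (s a, t a, [:: a]).

Definition parallel (p q : path) : bool :=
  (psrc p == psrc q) && (ptgt p == ptgt q).

Definition subpath (x p : path) : bool := infix (parrs x) (parrs p).

(* Z is a minimal set of paths of length >= 2 generating an admissible ideal *)
Definition monomial_rels (Z : seq path) : Prop :=
  [/\ uniq Z,
      (forall r, r \in Z -> is_path r /\ (2 <= size (parrs r))%N),
      (forall r r', r \in Z -> r' \in Z -> subpath r' r -> r' = r)
    & exists N : nat, forall p, is_path p -> (N <= size (parrs p))%N ->
        has (fun r => subpath r p) Z].

(* the basis paths: paths avoiding elements of Z as subpaths *)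
Definition inB (Z : seq path) (p : path) : bool :=
  is_path p && ~~ has (fun r => subpath r p) Z.

(* u^{a||g}: sum over occurrences of a in u of u with that occurrence
   replaced by g, keeping only basis paths *)
Definition subst (Z : seq path) (u : path) (a : Ar) (g : path)
  : {freeg path / k} :=
  \sum_(0 <= i < size (parrs u) | nth a (parrs u) i == a)
    (let w : path := (psrc u, ptgt u,
                      take i (parrs u) ++ parrs g ++ drop i.+1 (parrs u)) in
     if inB Z w then << w >> else 0).

Definition pairP (x : path) (S : {freeg path / k}) : {freeg (path * path) / k} :=
  fglift (fun y => << (x, y) >>) S.
Definition pairA (a : Ar) (S : {freeg path / k}) : {freeg (Ar * path) / k} :=
  fglift (fun y => << (a, y) >>) S.

(* elements of k(Q_1 || B): keys (a, g) stand for a || g *)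
Definition inQ1B (Z : seq path) (F : {freeg (Ar * path) / k}) : bool :=
  all (fun x => inB Z x.2 && parallel (arrowp x.1) x.2) (dom F).

Definition delta1 (Z : seq path) (F : {freeg (Ar * path) / k})
  : {freeg (path * path) / k} :=
  fglift (fun ag : Ar * path => \sum_(r <- Z) pairP r (subst Z r ag.1 ag.2)) F.

Definition inKer (Z : seq path) (F : {freeg (Ar * path) / k}) : Prop :=
  inQ1B Z F /\ delta1 Z F = 0.

Definition bracket (Z : seq path) (F G : {freeg (Ar * path) / k})
  : {freeg (Ar * path) / k} :=
  fglift (fun ag : Ar * path =>
    fglift (fun be : Ar * path =>
      pairA be.1 (subst Z be.2 ag.1 ag.2) - pairA ag.1 (subst Z ag.2 be.1 be.2))
    G) F.

(* the derivation associated with F acting on linear combinations of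
   paths: u |-> sum F(a,g) u^{a||g} *)
Definition act (Z : seq path) (F : {freeg (Ar * path) / k})
  (S : {freeg path / k}) : {freeg path / k} :=
  fglift (fun u => fglift (fun ag : Ar * path => subst Z u ag.1 ag.2) F) S.

(* p-power map: the element corresponding to the p-fold composite D_F^p,
   i.e. sum over arrows a of a || D_F^p(a) *)
Definition ppow (Z : seq path) (p : nat) (F : {freeg (Ar * path) / k})
  : {freeg (Ar * path) / k} :=
  \sum_(a : Ar) pairA a (iter p (act Z F) << arrowp a >>).

End Quiver.

(* A has vertices 'I_n.+2 : e_1 = ord0, e_n = ord_max.
   B has vertices 'I_n.+1 : f_1 = ord0 (= e_1 + e_n), f_i = e_i otherwise. *)
Section Gluing.
Context (k : fieldType) (n : nat) (Ar : finType) (s t : Ar -> 'I_n.+2).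

Definition glue (i : 'I_n.+2) : 'I_n.+1 :=
  if i == ord_max then ord0 else inord i.

Definition sB (a : Ar) : 'I_n.+1 := glue (s a).
Definition tB (a : Ar) : 'I_n.+1 := glue (t a).

Definition star (p : qpath 'I_n.+2 Ar) : qpath 'I_n.+1 Ar :=
  (glue (psrc p), glue (ptgt p), parrs p).

Definition glued_vertex (i : 'I_n.+2) : bool := (i == ord0) || (i == ord_max).

Definition ZB (Z : seq (qpath 'I_n.+2 Ar)) : seq (qpath 'I_n.+1 Ar) :=
  map star Z ++
  [seq (sB cb.1, tB cb.2, [:: cb.1; cb.2])
  | cb <- [seq (c, b) | c <- enum Ar, b <- enum Ar]
  & [&& glued_vertex (t cb.1), glued_vertex (s cb.2) & t cb.1 != s cb.2]].

Definition psi1 (F : {freeg (Ar * qpath 'I_n.+2 Ar) / k})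
  : {freeg (Ar * qpath 'I_n.+1 Ar) / k} :=
  fglift (fun ap : Ar * qpath 'I_n.+2 Ar => << (ap.1, star ap.2) >>) F.

Definition non_isolated (v : 'I_n.+2) : Prop := exists a : Ar, s a = v \/ t a = v.

End Gluing.

From HB Require Import structures.
From mathcomp Require Import all_boot all_order all_algebra.
From mathcomp Require Import freeg.
From mathcomp Require Import zify.
Set Implicit Arguments. Unset Strict Implicit. Unset Printing Implicit Defensive.
Import GRing.Theory.
Local Open Scope ring_scope.

(* psi_1 keeps arrow sequences unchanged, so it commutes with the substitutions
   u^{a||g} as soon as it preserves basis paths; it does, because the new relations
   b^* c^* (with t(c) <> s(b)) never occur inside a path of A.  Hence psi_1
   intertwines the brackets and the derivations D_F, thus the p-power maps, and it
   is injective on k(Q_1||B_A) because a path parallel to an arrow is determined by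
   the arrow and its arrow sequence.
   For delta^1, the only new terms come from the relations b^* c^*: replacing c or b
   by a basis path g creates another new relation, unless g is the trivial path and
   the replaced arrow is a loop al at e_1 or e_n.  Such terms vanish in Ker delta^1_A:
   some power al^m lies in Z_A, and the coefficient of al^m || al^(m-1) in delta^1_A(F)
   is m F(al || e), so F(al || e) = 0 when char k does not divide m. *)

Section FgliftLinear.
Context (R : nzRingType) (K : choiceType) (M : lmodType R) (f : K -> M).

HB.instance Definition _ :=
  GRing.isZmodMorphism.Build {freeg K / R} M (fglift f) (lift_is_additive f).

Lemma fglift_dom (D : {freeg K / R}) : fglift f D = \sum_(z <- dom D) coeff z D *: f z.
Proof. by rewrite -{1}(freeg_sumE D) raddf_sum; apply: eq_bigr => z _; apply: liftU. Qed.

Lemma fgliftZ : scalable (fglift f).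
Proof.
move=> c D; rewrite [c *: D]/(GRing.scale _ _) /= /fgscale raddf_sum.
rewrite [in RHS]fglift_dom scaler_sumr; apply: eq_bigr => z _.
by rewrite scalerA; apply: liftU.
Qed.

HB.instance Definition _ :=
  GRing.isScalable.Build R {freeg K / R} M *:%R (fglift f) fgliftZ.

(* Restated for [fglift f] itself: rewriting with [raddf_sum] or [raddfB] leaves the
   coercion of the linear structure, which [fgliftU1] no longer matches. *)
Lemma fglift_sum I (r : seq I) (P : pred I) (F : I -> {freeg K / R}) :
  fglift f (\sum_(i <- r | P i) F i) = \sum_(i <- r | P i) fglift f (F i).
Proof. exact: raddf_sum. Qed.

Lemma fgliftB (D1 D2 : {freeg K / R}) : fglift f (D1 - D2) = fglift f D1 - fglift f D2.
Proof. exact: raddfB. Qed.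

Lemma fgliftU1 x : fglift f << x >> = f x.
Proof. by rewrite liftU scale1r. Qed.

End FgliftLinear.

Section FgliftFree.
Context (R : nzRingType) (K K' : choiceType).

Lemma eq_in_fglift (M : lmodType R) (f g : K -> M) (D : {freeg K / R}) :
  {in dom D, f =1 g} -> fglift f D = fglift g D.
Proof. by move=> fg; rewrite !fglift_dom; apply: eq_big_seq => z /fg ->. Qed.

Lemma scale_freegU (c : R) (z : K) : c *: << z >> = << c *g z >>.
Proof. by apply/eqP/freeg_eqP => x; rewrite coeffZ !coeffU mul1r. Qed.

Lemma fglift_id (D : {freeg K / R}) : fglift (fun z => << z >>) D = D.
Proof.
rewrite fglift_dom -[RHS]freeg_sumE; apply: eq_bigr => z _; exact: scale_freegU.
Qed.

Lemma fglift_fglift (M : lmodType R) (g : K' -> M) (f : K -> {freeg K' / R}) D :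
  fglift g (fglift f D) = fglift (fun z => fglift g (f z)) D.
Proof.
rewrite [fglift f D]fglift_dom linear_sum [in RHS]fglift_dom.
by apply: eq_bigr => z _; rewrite linearZ.
Qed.

Lemma coeff_fglift (f : K -> {freeg K' / R}) (D : {freeg K / R}) x :
  coeff x (fglift f D) = \sum_(z <- dom D) coeff z D * coeff x (f z).
Proof. by rewrite fglift_dom raddf_sum; apply: eq_bigr => z _; apply: coeffZ. Qed.

Lemma dom_fglift (f : K -> {freeg K' / R}) (D : {freeg K / R}) x :
  x \in dom (fglift f D) -> exists2 z, z \in dom D & x \in dom (f z).
Proof.
rewrite mem_dom coeff_fglift => nz; apply/hasP; apply: contraNT nz => /hasPn off.
rewrite big_seq big1 // => z /off; rewrite mem_dom negbK => /eqP ->; exact: mulr0.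
Qed.
End FgliftFree.

Lemma coeff_dom (R : nzRingType) (K : choiceType) (D : {freeg K / R}) x :
  coeff x D = \sum_(z <- dom D) coeff z D * (z == x)%:R.
Proof.
by rewrite -[in LHS](fglift_id D) coeff_fglift; under eq_bigr do rewrite coeffU mul1r.
Qed.

Definition replace_at (V Ar : finType) (u : qpath V Ar) (i : nat) (g : qpath V Ar)
  : qpath V Ar :=
  (psrc u, ptgt u, take i (parrs u) ++ parrs g ++ drop i.+1 (parrs u)).

Section Walks.
Context (V Ar : finType) (s t : Ar -> V).
Local Notation path := (qpath V Ar).

Fixpoint walk (x : V) (l : seq Ar) (y : V) : bool :=
  if l is a :: l' then (s a == x) && walk (t a) l' y else x == y.

Definition walk_end (x : V) (l : seq Ar) : V := last x (map t l).

Lemma walk_cat x l1 l2 y :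
  walk x (l1 ++ l2) y = walk x l1 (walk_end x l1) && walk (walk_end x l1) l2 y.
Proof. by elim: l1 x => [|a l1 IH] x /=; rewrite ?eqxx // IH andbA. Qed.

Lemma walk_endP x l y : walk x l y -> y = walk_end x l.
Proof. by elim: l x => [|a l IH] x /=; [move/eqP | case/andP=> _ /IH]. Qed.

Lemma is_pathE (p : path) : is_path s t p = walk (psrc p) (parrs p) (ptgt p).
Proof.
case: p => [[x y] [|a l]] //; rewrite /is_path /psrc /ptgt /parrs /= eq_sym.
congr (_ && _); elim: l a => [|b l IH] a /=; first by rewrite andbT.
by rewrite -IH (eq_sym (s b)) andbCA.
Qed.

Lemma walk_infix2 x l y c b : walk x l y -> infix [:: c; b] l -> t c = s b.
Proof.
move=> + /infixP[p [q El]]; rewrite El walk_cat => /andP[_] /=.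
by case/and3P=> _ /eqP.
Qed.

Lemma walk_nseq c m : s c = t c -> walk (s c) (nseq m c) (s c).
Proof. by move=> loop; elim: m => [|m IH] /=; rewrite ?eqxx // -loop IH. Qed.

Lemma is_path_replace_at (u g : path) a i :
  is_path s t u -> (i < size (parrs u))%N -> nth a (parrs u) i = a ->
  is_path s t g -> psrc g = s a -> ptgt g = t a ->
  is_path s t (replace_at u i g).
Proof.
rewrite !is_pathE => pu ui ua pg gs gt /=.
move: pu; rewrite -{1}(cat_take_drop i (parrs u)) (drop_nth a ui) ua walk_cat.
case/andP=> pre /= /andP[/eqP sa post].
by rewrite walk_cat pre walk_cat -sa -gs -(walk_endP pg) pg gt.
Qed.

Lemma parallel_arrow_ends a (g : path) :
  parallel (arrowp s t a) g -> psrc g = s a /\ ptgt g = t a.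
Proof. by case/andP => /eqP <- /eqP <-. Qed.

End Walks.

Section Derivations.
Context (k : fieldType) (V Ar : finType) (s t : Ar -> V) (Z : seq (qpath V Ar)).
Local Notation path := (qpath V Ar).

Lemma substE (u : path) a (g : path) :
  subst k s t Z u a g =
  \sum_(0 <= i < size (parrs u) | nth a (parrs u) i == a)
    (if inB s t Z (replace_at u i g) then << replace_at u i g >> else 0).
Proof. by []. Qed.

Lemma dom_subst_path (u : path) a (g : path) :
  {in dom (subst k s t Z u a g), forall w, is_path s t w}.
Proof.
move=> w; rewrite substE => /dom_sum_subset /flattenP[d /mapP[i _ ->]].
by case: ifP => [/andP[pw _]|]; rewrite ?dom0 // domU1 inE => /eqP ->.
Qed.

Lemma dom_act_path (F : {freeg (Ar * path) / k}) (X : {freeg path / k}) :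
  {in dom (act s t Z F X), forall w, is_path s t w}.
Proof. by move=> w /dom_fglift[u _] /dom_fglift[ag _] /dom_subst_path. Qed.

Lemma inQ1B_dom (F : {freeg (Ar * path) / k}) : inQ1B s t Z F ->
  {in dom F, forall z, inB s t Z z.2 /\ parallel (arrowp s t z.1) z.2}.
Proof. by move/allP=> hF z /hF /andP. Qed.

Lemma coeff_pairP (r x q : path) (X : {freeg path / k}) :
  coeff (x, q) (pairP r X) = (r == x)%:R * coeff q X.
Proof.
rewrite coeff_fglift [coeff q X]coeff_dom mulr_sumr; apply: eq_bigr => z _.
by rewrite coeffU mul1r xpair_eqE -mulnb natrM mulrCA.
Qed.

Lemma coeff_delta1 (F : {freeg (Ar * path) / k}) (r q : path) : uniq Z -> r \in Z ->
  coeff (r, q) (delta1 s t Z F) =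
  \sum_(z <- dom F) coeff z F * coeff q (subst k s t Z r z.1 z.2).
Proof.
move=> uZ rZ; rewrite coeff_fglift; apply: eq_bigr => z _; congr (_ * _).
rewrite raddf_sum (bigD1_seq r) //= coeff_pairP eqxx mul1r big1 ?addr0 //.
by move=> r' /negbTE r'r; rewrite coeff_pairP r'r mul0r.
Qed.

End Derivations.

Section LoopRelations.
Context (k : fieldType) (V Ar : finType) (s t : Ar -> V) (Z : seq (qpath V Ar)).
Local Notation path := (qpath V Ar).
Hypothesis monZ : monomial_rels s t Z.
Variable c : Ar.
Hypothesis loop_c : s c = t c.
Local Notation power m := ((s c, s c, nseq m c) : path).

Lemma loop_power_rel : exists2 m, (2 <= m)%N & power m \in Z.
Proof.
case: monZ => _ Zpath _ [N admissible].
have /hasP[r rZ rsub] : has (fun r => subpath r (power N.+2)) Z.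
  by apply: admissible; rewrite ?is_pathE ?walk_nseq //= size_nseq; lia.
have [pr r2] := Zpath r rZ.
have rE : parrs r = nseq (size (parrs r)) c.
  apply/all_pred1P/allP => y /(mem_infix rsub); rewrite mem_nseq => /andP[_ /eqP->].
  exact: eqxx.
exists (size (parrs r)) => //.
case: r rZ pr rE r2 {rsub} => [[x y] l]; rewrite is_pathE /psrc /ptgt /parrs /=.
move: (size l) => [//|m] rZ + lE; rewrite lE in rZ * => /= /andP[/eqP sx pr] _.
by rewrite -sx (walk_endP pr) -loop_c -(walk_endP (walk_nseq m loop_c)) in rZ.
Qed.

Lemma inB_loop_power_pred m : (0 < m)%N -> power m \in Z -> inB s t Z (power m.-1).
Proof.
case: monZ => _ _ minimal _ m0 rZ.
rewrite /inB is_pathE walk_nseq //=; apply/hasPn => r rZ'; apply/negP => rsub.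
have rE : r = power m.
  apply: minimal rZ rZ' _; apply: (infix_trans rsub).
  by rewrite /subpath /= -{2}(prednK m0) -addn1 nseqD; apply: prefix_infix.
by have := size_infix rsub; rewrite rE /= !size_nseq; lia.
Qed.

Lemma coeff_subst_loop_power m a (g : path) :
  (0 < m)%N -> inB s t Z (power m.-1) -> psrc g = s a -> ptgt g = t a ->
  coeff (power m.-1) (subst k s t Z (power m) a g) = ((a, g) == (c, power 0))%:R *+ m.
Proof.
move=> m0 qB gs gt; rewrite substE raddf_sum /= size_nseq big_mkcond /=.
rewrite -[in RHS](subn0 m) -sumr_const_nat; apply: eq_big_nat => i /andP[_ im].
rewrite nth_nseq im xpair_eqE; have [ac /=|_] := eqVneq a c; last by [].
subst a.
have -> : replace_at (power m) i g = (s c, s c, nseq i c ++ parrs g ++ nseq (m - i.+1) c).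
  by rewrite /replace_at /= take_nseq ?drop_nseq // ltnW.
have [-> /=|gne] := eqVneq g (power 0).
  by rewrite -nseqD (_ : i + (m - i.+1) = m.-1)%N ?qB ?coeffU ?mul1r ?eqxx //; lia.
case: ifP => _; last by rewrite coeff0.
rewrite coeffU mul1r; case: eqP => // /(congr1 (fun w : path => size (parrs w))) /=.
rewrite !size_cat !size_nseq => size_eq; case/eqP: gne.
case: g gs gt size_eq => [[x y] l]; rewrite /psrc /ptgt /parrs /= => -> -> size_eq.
by rewrite -loop_c (_ : l = [::]) //; apply: size0nil; lia.
Qed.

Lemma coeff_loop_eq0 (F : {freeg (Ar * path) / k}) :
  inKer s t Z F -> (forall m, (2 <= m)%N -> power m \in Z -> m%:R != 0 :> k) ->
  coeff (c, power 0) F = 0.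
Proof.
case=> /inQ1B_dom hF dF nonzero.
have [m m2 rZ] := loop_power_rel; have m0 : (0 < m)%N by lia.
have term z : z \in dom F ->
    coeff z F * coeff (power m.-1) (subst k s t Z (power m) z.1 z.2) =
    (coeff z F * (z == (c, power 0))%:R) *+ m.
  case: z => a g /hF[_ /parallel_arrow_ends[gs gt]].
  by rewrite coeff_subst_loop_power ?inB_loop_power_pred // mulrnAr.
have := congr1 (coeff (power m, power m.-1)) dF.
rewrite coeff0 coeff_delta1 //; last by case: monZ.
rewrite (eq_big_seq _ term) sumrMnl -coeff_dom -mulr_natr => /eqP.
by rewrite mulf_eq0 (negbTE (nonzero m m2 rZ)) orbF => /eqP.
Qed.

End LoopRelations.

Section Gluing.
Context (n : nat) (Ar : finType) (s t : Ar -> 'I_n.+2) (Z : seq (qpath 'I_n.+2 Ar)).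
Local Notation PA := (qpath 'I_n.+2 Ar).
Local Notation PB := (qpath 'I_n.+1 Ar).
Local Notation sb := (sB s).
Local Notation tb := (tB t).

Definition glued_rels : seq PB :=
  [seq (sb cb.1, tb cb.2, [:: cb.1; cb.2])
  | cb <- [seq (c, b) | c <- enum Ar, b <- enum Ar]
  & [&& glued_vertex (t cb.1), glued_vertex (s cb.2) & t cb.1 != s cb.2]].

Lemma ZBE : ZB s t Z = map (@star n Ar) Z ++ glued_rels.
Proof. by []. Qed.

Lemma mem_glued_rels r : r \in glued_rels -> exists c b,
  [/\ glued_vertex (t c), glued_vertex (s b), t c != s b & r = (sb c, tb b, [:: c; b])].
Proof.
by case/mapP=> -[c b]; rewrite mem_filter => /andP[/and3P[gc gb ne] _] ->; exists c, b.
Qed.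

Lemma inB_glued_rel (w : PB) c b :
  glued_vertex (t c) -> glued_vertex (s b) -> t c != s b ->
  infix [:: c; b] (parrs w) -> inB sb tb (ZB s t Z) w = false.
Proof.
move=> gc gb ne cbw; apply/negbTE; rewrite negb_and negbK; apply/orP; right.
apply/hasP; exists (sb c, tb b, [:: c; b]) => //; rewrite ZBE mem_cat; apply/orP; right.
apply/mapP; exists (c, b) => //; rewrite mem_filter /= gc gb ne.
by apply: allpairs_f; rewrite mem_enum.
Qed.

Lemma walk_glue x l y : walk s t x l y -> walk sb tb (glue x) l (glue y).
Proof.
elim: l x => [|a l IH] x /=; first by move/eqP->.
by case/andP=> /eqP <- /IH ->; rewrite /sB eqxx.
Qed.

Lemma is_path_star (p : PA) : is_path s t p -> is_path sb tb (star p).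
Proof. by rewrite !is_pathE; apply: walk_glue. Qed.

Lemma inB_star (w : PA) : is_path s t w -> inB sb tb (ZB s t Z) (star w) = inB s t Z w.
Proof.
move=> pw; rewrite /inB pw is_path_star //= ZBE has_cat has_map; congr (~~ _).
rewrite [X in _ || X](_ : _ = false) ?orbF //; apply/hasPn => r /mem_glued_rels.
case=> c [b [_ _ ne ->]]; apply: contra ne; move: pw; rewrite is_pathE.
by move=> /walk_infix2 /[apply] ->.
Qed.

Lemma parallel_star a (p : PA) :
  parallel (arrowp s t a) p -> parallel (arrowp sb tb a) (star p).
Proof.
case: p => -[x y] l /parallel_arrow_ends[]; rewrite /psrc /ptgt /= => -> ->.
by rewrite /parallel /= /sB /tB !eqxx.
Qed.

Definition unstar (a : Ar) (p : PB) : PA := (s a, t a, parrs p).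

Lemma unstarK a (p : PA) : parallel (arrowp s t a) p -> unstar a (star p) = p.
Proof. by case/parallel_arrow_ends; rewrite /unstar => <- <-; case: p => -[]. Qed.

End Gluing.

Section Psi1.
Context (k : fieldType) (n : nat) (Ar : finType) (s t : Ar -> 'I_n.+2).
Context (Z : seq (qpath 'I_n.+2 Ar)).
Local Notation PA := (qpath 'I_n.+2 Ar).
Local Notation PB := (qpath 'I_n.+1 Ar).
Local Notation sb := (sB s).
Local Notation tb := (tB t).
Local Notation ZB := (ZB s t Z).
Local Notation FA := {freeg (Ar * PA) / k}.
Local Notation FB := {freeg (Ar * PB) / k}.

Definition lstar (X : {freeg PA / k}) : {freeg PB / k} := fglift (fun p => << star p >>) X.

Definition lstar2 (X : {freeg (PA * PA) / k}) : {freeg (PB * PB) / k} :=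
  fglift (fun rq => << (star rq.1, star rq.2) >>) X.

Definition unpsi1 (G : FB) : FA := fglift (fun ap => << (ap.1, unstar s t ap.1 ap.2) >>) G.

Lemma psi1K (F : FA) : inQ1B s t Z F -> unpsi1 (psi1 F) = F.
Proof.
move/inQ1B_dom=> hF; rewrite /unpsi1 /psi1 fglift_fglift -[RHS]fglift_id.
by apply: eq_in_fglift => -[a p] /hF[_ ap]; rewrite fgliftU1 /= unstarK.
Qed.

Lemma psi1_inj (F G : FA) : inQ1B s t Z F -> inQ1B s t Z G -> psi1 F = psi1 G -> F = G.
Proof. by move=> hF hG eFG; rewrite -(psi1K hF) -(psi1K hG) eFG. Qed.

Lemma psi1_inQ1B (F : FA) : inQ1B s t Z F -> inQ1B sb tb ZB (psi1 F).
Proof.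
move/inQ1B_dom=> hF; apply/allP => x /dom_fglift[[a g] /hF[gB ag]].
rewrite domU1 inE => /eqP -> /=; rewrite inB_star ?gB ?parallel_star //.
by case/andP: gB.
Qed.

Lemma subst_star (u g : PA) a :
  is_path s t u -> is_path s t g -> psrc g = s a -> ptgt g = t a ->
  subst k sb tb ZB (star u) a (star g) = lstar (subst k s t Z u a g).
Proof.
move=> pu pg gs gt; rewrite !substE /lstar fglift_sum [LHS]big_nat_cond [RHS]big_nat_cond.
apply: eq_bigr => i /andP[/andP[_ iu] /eqP ua].
have -> : replace_at (star u) i (star g) = star (replace_at u i g) by [].
rewrite inB_star; last exact: (is_path_replace_at pu iu ua pg gs gt).
by case: (inB s t Z _); rewrite ?fgliftU1 ?raddf0.
Qed.

Lemma pairP_star (r : PA) (X : {freeg PA / k}) :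
  pairP (star r) (lstar X) = lstar2 (pairP r X).
Proof.
rewrite /pairP /lstar /lstar2 !fglift_fglift.
by apply: eq_in_fglift => z _; rewrite !fgliftU1.
Qed.

Lemma psi1_pairA a (X : {freeg PA / k}) : psi1 (pairA a X) = pairA a (lstar X).
Proof.
rewrite /psi1 /pairA /lstar !fglift_fglift.
by apply: eq_in_fglift => z _; rewrite !fgliftU1.
Qed.

Lemma psi1_bracket (F G : FA) : inQ1B s t Z F -> inQ1B s t Z G ->
  psi1 (bracket s t Z F G) = bracket sb tb ZB (psi1 F) (psi1 G).
Proof.
move=> /inQ1B_dom hF /inQ1B_dom hG.
rewrite /bracket [psi1 _]fglift_fglift [RHS]fglift_fglift.
apply: eq_in_fglift => -[a g] /hF[/andP[pg _] /parallel_arrow_ends[gs gt]].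
rewrite fgliftU1 fglift_fglift [RHS]fglift_fglift /=.
apply: eq_in_fglift => -[b e] /hG[/andP[pe _] /parallel_arrow_ends[es et]].
by rewrite fgliftU1 /= fgliftB -!/(psi1 _) !psi1_pairA !subst_star.
Qed.

Lemma act_psi1 (F : FA) (X : {freeg PA / k}) :
  inQ1B s t Z F -> {in dom X, forall u, is_path s t u} ->
  act sb tb ZB (psi1 F) (lstar X) = lstar (act s t Z F X).
Proof.
move=> /inQ1B_dom hF pX; rewrite /act /lstar !fglift_fglift.
apply: eq_in_fglift => u /pX pu; rewrite fgliftU1 fglift_fglift /psi1 fglift_fglift.
apply: eq_in_fglift => -[a g] /hF[/andP[pg _] /parallel_arrow_ends[gs gt]].
by rewrite fgliftU1 /= subst_star.
Qed.

Lemma iter_act_psi1 (F : FA) p (X : {freeg PA / k}) :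
  inQ1B s t Z F -> {in dom X, forall u, is_path s t u} ->
  iter p (act sb tb ZB (psi1 F)) (lstar X) = lstar (iter p (act s t Z F) X).
Proof.
move=> hF pX; elim: p => [|p IH] //=; rewrite IH act_psi1 //.
by case: p {IH} => [|p] //=; apply: dom_act_path.
Qed.

Lemma psi1_ppow p (F : FA) : inQ1B s t Z F ->
  psi1 (ppow s t Z p F) = ppow sb tb ZB p (psi1 F).
Proof.
move=> hF; rewrite /ppow {1}/psi1 fglift_sum; apply: eq_bigr => a _.
rewrite -/(psi1 _) psi1_pairA -iter_act_psi1 //; first by rewrite /lstar fgliftU1.
by move=> x; rewrite domU1 inE => /eqP ->; rewrite is_pathE /= !eqxx.
Qed.

Lemma subst_glued_rel c b a (g : PA) :
  glued_vertex (t c) -> glued_vertex (s b) -> t c != s b ->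
  is_path s t g -> psrc g = s a -> ptgt g = t a ->
  (parrs g = [::] -> ~~ glued_vertex (s a)) ->
  subst k sb tb ZB (sb c, tb b, [:: c; b]) a (star g) = 0.
Proof.
move=> gc gb ne pg gs gt nonloop; rewrite substE big_nat_cond big1 // => i.
case/andP=> /andP[_ +] /eqP; case: i => [|[|//]] _ /= ea; subst a.
all: move: pg nonloop; rewrite /is_path /replace_at /=; case E: (parrs g) => [|x l].
- by move=> /eqP sg /(_ erefl); rewrite -gs sg gt gc.
- case/and3P=> _ /eqP tl _ _; rewrite (inB_glued_rel Z (c := last x l) (b := b)) ?tl ?gt //.
  change (infix [:: last x l; b] ((x :: l) ++ [:: b])).
  by rewrite (lastI x l) cat_rcons; apply: suffix_infix.
- by move=> _ /(_ erefl); rewrite gb.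
- case/and3P=> /eqP sx _ _ _; rewrite (inB_glued_rel Z (c := c) (b := x)) ?sx ?gs //.
  exact: (prefix_infix [:: c; x] (l ++ [::])).
Qed.

Lemma delta1_psi1 (F : FA) : {in Z, forall r, is_path s t r} -> inQ1B s t Z F ->
  (forall a, s a = t a -> glued_vertex (s a) -> coeff (a, (s a, s a, [::])) F = 0) ->
  delta1 sb tb ZB (psi1 F) = lstar2 (delta1 s t Z F).
Proof.
move=> Zpath /inQ1B_dom hF loops_off.
rewrite /delta1 /psi1 /lstar2 !fglift_fglift; apply: eq_in_fglift => -[a g] agF.
have [/andP[pg _] /parallel_arrow_ends[gs gt]] := hF _ agF.
rewrite fgliftU1 /= ZBE big_cat big_map fglift_sum /=.
rewrite [X in _ + X]big1_seq ?addr0 => [|r /andP[_ /mem_glued_rels[c [b [gc gb ne ->]]]]].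
  by apply: eq_big_seq => r /Zpath pr; rewrite subst_star // pairP_star.
rewrite subst_glued_rel ?[pairP _ _]raddf0 // => g0; apply/negP => glued.
have loop_a : s a = t a by move: pg; rewrite /is_path g0 gs gt => /eqP.
have gE : g = (s a, s a, [::]).
  case: g gs gt g0 {pg agF} => -[x y] l; rewrite /psrc /ptgt /parrs /= => -> -> ->.
  by rewrite loop_a.
by move: agF; rewrite mem_dom gE loops_off ?eqxx.
Qed.

End Psi1.

Theorem proposition3p12 (k : fieldType) (n : nat) (Ar : finType)
    (s t : Ar -> 'I_n.+2) (Z : seq (qpath 'I_n.+2 Ar)) :
  monomial_rels s t Z ->
  non_isolated s t ord0 -> non_isolated s t ord_max ->
  (forall (al : Ar) (m : nat),
      s al = t al -> glued_vertex (s al) -> (2 <= m)%N ->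
      (s al, s al, nseq m al) \in Z ->
      forall p : nat, p \in [pchar k] -> ~~ (p %| m)%N) ->
  [/\ (forall F : {freeg (Ar * qpath 'I_n.+2 Ar) / k},
          inKer s t Z F -> inKer (sB s) (tB t) (ZB s t Z) (psi1 F)),
      (forall (c : k) (F G : {freeg (Ar * qpath 'I_n.+2 Ar) / k}),
          psi1 (c *: F + G) = c *: psi1 F + psi1 G),
      (forall F G : {freeg (Ar * qpath 'I_n.+2 Ar) / k},
          inKer s t Z F -> inKer s t Z G -> psi1 F = psi1 G -> F = G),
      (forall F G : {freeg (Ar * qpath 'I_n.+2 Ar) / k},
          inKer s t Z F -> inKer s t Z G ->
          psi1 (bracket s t Z F G) =
          bracket (sB s) (tB t) (ZB s t Z) (psi1 F) (psi1 G))
    & (forall p : nat, p \in [pchar k] ->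
        forall F : {freeg (Ar * qpath 'I_n.+2 Ar) / k},
          inKer s t Z F ->
          psi1 (ppow s t Z p F) = ppow (sB s) (tB t) (ZB s t Z) p (psi1 F))].
Proof.
move=> monZ _ _ char_ndvd.
have Zpath : {in Z, forall r, is_path s t r} by case: monZ => _ Zr _ _ r /Zr[].
have loops_off (F : {freeg (Ar * qpath 'I_n.+2 Ar) / k}) : inKer s t Z F ->
    forall a, s a = t a -> glued_vertex (s a) ->
    coeff (a, (s a, s a, [::])) F = 0.
  move=> kerF a loop glued; apply: (coeff_loop_eq0 monZ loop kerF) => m m2 rZ.
  apply/negP => m0; have [p charp] := natf0_pchar (ltnW m2) m0.
  by have := char_ndvd a m loop glued m2 rZ p charp; rewrite (dvdn_pcharf charp) m0.
split.
- move=> F kerF; have [qF dF] := kerF; split; first exact: psi1_inQ1B.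
  by rewrite delta1_psi1 //; [rewrite dF /lstar2 raddf0 | exact: loops_off].
- by move=> c F G; apply: linearP.
- by move=> F G [qF _] [qG _]; apply: psi1_inj qF qG.
- by move=> F G [qF _] [qG _]; apply: psi1_bracket.
- by move=> p _ F [qF _]; apply: psi1_ppow.
Qed.
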